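(* Let $a_1,\dots,a_n$ be nonzero integers, consider the equation $a_1x_1+\cdots+a_nx_n=0$, and for $1\le l\le n$ let $$S_l=-\frac{\left(\sum_{i=1}^n a_i\right)-a_l}{a_l}.$$ Suppose there exists an upper triangular $m\times m$ matrix $(c_{i,j})$ whose entries $c_{i,j}$ with $i\le j$ are all positive, each equal to $S_l$ for some $1\le l\le n$, and which has the linkage property. Then the equation is strongly $m$-regular; that is, for every finite collection of inequalities $A_{j,1}x_1+\cdots+A_{j,n}x_n\neq0$ ($1\le j\le k$, $A_{j,i}\in\mathbb{Z}$), none of which is a multiple of the equation, the system consisting of the equation and these inequalities is $m$-regular.
   Context: An upper triangular $m\times m$ matrix $(c_{i,j})$ (with $c_{i,j}=0$ for $i>j$) has the linkage property if for every integer $i$ with $1\le i\le m-1$ and every $j$ with $i<j\le m$, one has $c_{1,i}\cdot c_{i+1,j}=c_{1,j}$. An inequality $A_{1}x_1+\cdots+A_nx_n\neq0$ is a multiple of the equation if $(A_1,\dots,A_n)$ is a scalar multiple of $(a_1,\dots,a_n)$. A system of the equation together with finitely many inequalities is $m$-regular if for every coloring of the positive integers with $m$ colors there exist positive integers $x_1,\dots,x_n$, all of the same color, satisfying the equation and all inequalities. The equation is strongly $m$-regular if adding any finite set of integer-coefficient inequalities, none a multiple of the equation, yields an $m$-regular system. *)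

From mathcomp Require Import all_boot all_order all_algebra.
Set Implicit Arguments. Unset Strict Implicit. Unset Printing Implicit Defensive.
Import Order.TTheory GRing.Theory Num.Theory.
Local Open Scope ring_scope.

Definition S_coef (n : nat) (a : 'I_n -> int) (l : 'I_n) : rat :=
  - (((\sum_(i < n) a i) - a l)%:~R) / (a l)%:~R.

(* Upper triangular (entries below the diagonal vanish); indices are
   0-based ordinals, so the paper's c_{i,j} is c (i-1) (j-1). *)
Definition upper_triangular (m : nat) (c : 'M[rat]_m) : Prop :=
  forall i j : 'I_m, (j < i)%N -> c i j = 0.

Definition linkage (m : nat) (c : 'M[rat]_m) : Prop :=
  forall i0 i j k : 'I_m, val i0 = 0%N -> val j = (val i).+1 ->
    (val i < val k)%N -> c i0 i * c j k = c i0 k.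

Definition lin_form (n : nat) (A : 'I_n -> int) (x : 'I_n -> nat) : int :=
  \sum_(i < n) A i * (x i)%:Z.

Definition is_multiple (n : nat) (A a : 'I_n -> int) : Prop :=
  exists lam : rat, forall i, (A i)%:~R = lam * (a i)%:~R.

Definition m_regular_system (n m k : nat) (a : 'I_n -> int)
    (A : 'I_k -> 'I_n -> int) : Prop :=
  forall col : nat -> 'I_m,
    exists x : 'I_n -> nat,
      (forall i, (0 < x i)%N) /\
      (forall i j, col (x i) = col (x j)) /\
      lin_form a x = 0 /\
      (forall j, lin_form (A j) x != 0).

Definition strongly_m_regular (n m : nat) (a : 'I_n -> int) : Prop :=
  forall (k : nat) (A : 'I_k -> 'I_n -> int),
    (forall j, ~ is_multiple (A j) a) -> m_regular_system m a A.

(* Write t_0 = 1 and t_j = c_{1,j}; the linkage property gives t_q = c_{p+1,q} t_p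
   for p < q, so after clearing denominators we get positive integers
   N_0, ..., N_m whose ratios N_q / N_p (p < q) are all of the form S_l.
   Colour z by the vector of colours of N_0 z, ..., N_m z and take a long
   monochromatic progression y + r d (van der Waerden).  Two of the m + 1
   numbers N_j y share a colour, say N_p y and N_q y with N_q = S_l N_p; then
   x_i = M_i (y + r_i d) with M_l = N_q and M_i = N_p otherwise is monochromatic
   whenever every r_i is at most the length of the progression, and
   sum_i a_i M_i = 0.  It remains to choose small r_i solving the equation and
   avoiding the finitely many hyperplanes of the inequalities, which are not
   parallel to the hyperplane of the equation. *)

From mathcomp Require Import all_boot all_order all_algebra.
From mathcomp Require Import zify ring lra.
Import Order.TTheory GRing.Theory Num.Theory.
Set Implicit Arguments. Unset Strict Implicit. Unset Printing Implicit Defensive.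

Definition mono_ap (T : Type) (chi : nat -> T) (k N : nat) :=
  exists a d, [/\ 0 < d, d <= N, a + k * d < N &
    forall j, j <= k -> chi (a + j * d) = chi a].

Definition vdW (k : nat) :=
  forall T : finType, exists N, forall chi : nat -> T, mono_ap chi k N.

Lemma vdW0 : vdW 0.
Proof.
move=> T; exists 1 => chi; exists 0, 1; split=> // j.
by rewrite leqn0 => /eqP ->.
Qed.

Lemma ap_extend (T : Type) (chi : nat -> T) k a d :
  (forall j, j <= k -> chi (a + j * d) = chi a) -> chi (a + k.+1 * d) = chi a ->
  forall j, j <= k.+1 -> chi (a + j * d) = chi a.
Proof.
move=> Hap Hlast j; rewrite leq_eqVlt ltnS => /orP [/eqP ->|] //.
exact: Hap.
Qed.

Lemma surj_of_inj_card (T : finType) (g : nat -> T) :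
  (forall i i', i < #|T| -> i' < #|T| -> g i = g i' -> i = i') ->
  forall t, exists2 i, i < #|T| & g i = t.
Proof.
move=> g_inj t.
have inj_g : injective (fun i : 'I_#|T| => g i).
  by move=> i i' /g_inj eq_ii'; apply/val_inj/eq_ii'.
have [h _ gK] := inj_card_bij inj_g (eq_leq (esym (card_ord _))).
by exists (h t) => //; rewrite gK.
Qed.

Section Focusing.

Variables (k : nat) (T : finType).
Hypothesis vdWk : vdW k.

(* [s] monochromatic progressions of length [k.+1], of distinct colours, whose
   next terms all coincide at the focus [f]. *)
Definition focused (chi : nat -> T) s N :=
  exists2 f, f < N & exists a d : nat -> nat,
    (forall i, i < s -> [/\ 0 < d i, a i + k.+1 * d i = f &
       forall j, j <= k -> chi (a i + j * d i) = chi (a i)]) /\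
    (forall i i', i < s -> i' < s -> chi (a i) = chi (a i') -> i = i').

Section Blocks.

Variables (chi : nat -> T) (Ns b e M : nat).
Hypotheses (e_gt0 : 0 < e) (e_le : e <= M) (bke_lt : b + k * e < M).
Hypothesis block_ap : forall j o, j <= k -> o < Ns ->
  chi (Ns * (b + j * e) + o) = chi (Ns * b + o).

Lemma mono_ap_block :
  mono_ap (fun x => chi (Ns * b + x)) k.+1 Ns -> mono_ap chi k.+1 (Ns * (2 * M)).
Proof.
move=> [a [d [d_gt0 d_le ad_lt Hap]]]; exists (Ns * b + a), d; split=> //.
- by apply: (leq_trans d_le); nia.
- by nia.
- by move=> j /Hap; rewrite -addnA.
Qed.

Lemma ap_shift a d : a + k.+1 * d < Ns ->
  (forall j, j <= k -> chi (Ns * b + (a + j * d)) = chi (Ns * b + a)) ->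
  forall j, j <= k -> chi (Ns * b + a + j * (d + Ns * e)) = chi (Ns * b + a).
Proof.
move=> ad_le Hap j jk.
have -> : Ns * b + a + j * (d + Ns * e) = Ns * (b + j * e) + (a + j * d) by ring.
by rewrite block_ap ?Hap //; nia.
Qed.

Lemma focused_extend s : focused (fun x => chi (Ns * b + x)) s Ns ->
  mono_ap chi k.+1 (Ns * (2 * M)) \/ focused chi s.+1 (Ns * (2 * M)).
Proof.
move=> [f f_lt [a [d [Hap a_inj]]]].
case: (pickP (fun i : 'I_s => chi (Ns * b + a i) == chi (Ns * b + f))) => [i /eqP Hi|Hno].
  have [d_gt0 ad_eq Hi_ap] := Hap i (ltn_ord i).
  left; apply: mono_ap_block; exists (a i), (d i); split=> //.
  - by nia.
  - by rewrite ad_eq.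
  - by apply: (@ap_extend _ (fun x => chi (Ns * b + x))); rewrite // ad_eq.
(* The focus is itself a progression of difference 0, so the old progressions
   and the new one are all moved along the block progression in the same way. *)
pose a' i := if i < s then a i else f.
pose d' i := if i < s then d i else 0.
have Hap' i : i <= s -> a' i + k.+1 * d' i = f /\
    forall j, j <= k -> chi (Ns * b + (a' i + j * d' i)) = chi (Ns * b + a' i).
  rewrite /a' /d' leq_eqVlt => /orP [/eqP ->|lt_is].
    by rewrite ltnn; split=> [|j _]; rewrite muln0 addn0.
  by rewrite lt_is; have [_ -> ?] := Hap i lt_is; split.
right; exists (Ns * b + f + k.+1 * (Ns * e)); first by nia.
exists (fun i => Ns * b + a' i), (fun i => d' i + Ns * e); split.
  move=> i; rewrite ltnS => le_is; have [ad_eq Hi_ap] := Hap' i le_is; split.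
  - by rewrite addn_gt0 orbC muln_gt0 e_gt0 andbT; nia.
  - by rewrite -ad_eq; ring.
  - by apply: ap_shift => //; rewrite ad_eq.
move=> i i'; rewrite !ltnS /a' => le_is le_i's.
case: ltnP => [ilt|ige]; case: ltnP => [i'lt|i'ge] //.
- by move/(a_inj _ _ ilt i'lt).
- by move=> h; have := Hno (Ordinal ilt); rewrite /= h eqxx.
- by move=> h; have := Hno (Ordinal i'lt); rewrite /= h eqxx.
- by lia.
Qed.

End Blocks.

Lemma mono_ap_or_focused s : exists N, forall chi : nat -> T,
  mono_ap chi k.+1 N \/ focused chi s N.
Proof.
elim: s => [|s [Ns HNs]].
  by exists 1 => chi; right; exists 0 => //; exists id, id.
have [M HM] := vdWk {ffun 'I_Ns -> T}.
exists (Ns * (2 * M)) => chi.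
have [b [e [e_gt0 e_le bke_lt Hb]]] := HM (fun b => [ffun o : 'I_Ns => chi (Ns * b + o)]).
have block_ap j o : j <= k -> o < Ns -> chi (Ns * (b + j * e) + o) = chi (Ns * b + o).
  move=> jk oN; have := congr1 (fun F : {ffun 'I_Ns -> T} => F (Ordinal oN)) (Hb j jk).
  by rewrite !ffunE.
case: (HNs (fun x => chi (Ns * b + x))) => [inner|foc].
  by left; apply: (mono_ap_block e_gt0 e_le bke_lt inner).
exact: (focused_extend e_gt0 e_le bke_lt block_ap foc).
Qed.

End Focusing.

Theorem van_der_waerden k : vdW k.
Proof.
elim: k => [|k vdWk]; first exact: vdW0.
move=> T; have [N HN] := @mono_ap_or_focused k T vdWk #|T|.
exists N => chi; case: (HN chi) => // [[f f_lt [a [d [Hap a_inj]]]]].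
have [i iT Hi] := surj_of_inj_card a_inj (chi f).
have [d_gt0 ad_eq Hi_ap] := Hap i iT.
exists (a i), (d i); split=> //; first by nia.
- by rewrite ad_eq.
- by apply: ap_extend => //; rewrite ad_eq.
Qed.

Lemma dilations_ap (T : finType) (m : nat) (N : 'I_m -> nat) (col : nat -> T) L :
  exists y d, [/\ 0 < y, 0 < d &
    forall j r, r <= L -> col (N j * (y + r * d)) = col (N j * y)].
Proof.
have [M HM] := van_der_waerden L {ffun 'I_m -> T}.
have [y0 [d [d_gt0 _ _ Hap]]] := HM (fun z => [ffun j => col (N j * z.+1)]).
exists y0.+1, d; split=> // j r /Hap /(congr1 (fun F : {ffun 'I_m -> T} => F j)).
by rewrite !ffunE addSn.
Qed.

Lemma pigeonhole_lt (m : nat) (f : 'I_m.+1 -> 'I_m) :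
  exists p q : 'I_m.+1, p < q /\ f p = f q.
Proof.
have /injectivePn [p [q neq_pq fpq]] : ~~ injectiveb f.
  by apply/negP => /injectiveP/leq_card; rewrite !card_ord ltnn.
by case: (ltngtP p q) => [lt_pq|lt_qp|/val_inj eq_pq];
  [exists p, q | exists q, p | rewrite eq_pq eqxx in neq_pq].
Qed.

Local Open Scope ring_scope.

Lemma affine_nonvanishing_point1 (k : nat) (u v : 'I_k -> int) :
  exists2 tau : nat, (tau <= k)%N & forall j, v j != 0 -> u j + v j * tau%:Z != 0.
Proof.
pose root j : 'I_k.+1 :=
  odflt ord0 [pick t : 'I_k.+1 | u j + v j * (val t)%:Z == 0].
have : ~~ ([set: 'I_k.+1] \subset [set root j | j in 'I_k]).
  apply/negP => /subset_leq_card; rewrite cardsT card_ord => le_k1_k.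
  by have := leq_trans le_k1_k (leq_imset_card _ _); rewrite card_ord ltnn.
case/subsetPn => t _ t_nroot; exists (val t); first exact: ltn_ord t.
move=> j vj_nz; apply/negP => /eqP t_root.
move/negP: t_nroot; case; apply/imsetP; exists j => //.
rewrite /root; case: pickP => [t' /eqP t'_root|/(_ t)]; last by rewrite t_root eqxx.
apply: val_inj => /=; apply/eqP; rewrite -(eqr_nat int); apply/eqP.
apply: (mulfI vj_nz); apply: (addrI (u j)); by rewrite !natz t_root t'_root.
Qed.

Lemma affine_nonvanishing_point (k r : nat) (B : 'I_k -> 'I_r -> int) (c : 'I_k -> int) :
  exists t : 'I_r -> nat, (forall i, t i <= k)%N /\
    forall j, (exists i, B j i != 0) -> c j + \sum_(i < r) B j i * (t i)%:Z != 0.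
Proof.
elim: r B => [|r IH] B; first by exists (fun _ => 0%N); split => // j [[]].
have [t [t_le Ht]] := IH (fun j i => B j (lift ord_max i)).
have [tau tau_le Htau] := affine_nonvanishing_point1
  (fun j => c j + \sum_(i < r) B j (lift ord_max i) * (t i)%:Z)
  (fun j => B j ord_max).
exists (fun i => if unlift ord_max i is Some i' then t i' else tau); split.
  by move=> i; case: unlift.
move=> j [i Bji_nz]; rewrite big_ord_recr /= unlift_none.
have widenE (i' : 'I_r) : widen_ord (leqnSn r) i' = lift ord_max i'.
  by apply: val_inj; rewrite [RHS]lift_max.
under eq_bigr => i' _ do rewrite widenE liftK.
case: (eqVneq (B j ord_max) 0) => [Bjm0|]; last by rewrite addrA; apply: Htau.
rewrite Bjm0 mul0r addr0; apply: Ht.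
case: (unliftP ord_max i) Bji_nz => [i' ->|->]; last by rewrite Bjm0 eqxx.
by exists i'.
Qed.

Lemma scale_to_nat (I : finType) (f : I -> rat) : (forall i, 0 < f i) ->
  exists2 D : rat, 0 < D & exists N : I -> nat, forall i, (N i)%:R = f i * D.
Proof.
move=> f_gt0; pose D := \prod_i denq (f i).
have D_gt0 : 0 < D by apply: prodr_gt0 => i _; apply: denq_gt0.
exists D%:~R; first by rewrite ltr0z.
apply: (@fin_all_exists _ (fun=> nat) (fun i Ni => Ni%:R = f i * D%:~R)) => i.
pose z := numq (f i) * \prod_(j | j != i) denq (f j).
have z_gt0 : 0 < z.
  by rewrite mulr_gt0 ?numq_gt0 ?f_gt0 //; apply: prodr_gt0 => j _; apply: denq_gt0.
exists (absz z); rewrite natr_absz gtr0_norm // /D (bigD1 i) //=.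
by rewrite !rmorphM /= mulrA; congr (_ * _); apply: numqE.
Qed.

Definition linkage_prefix (m : nat) (c : 'M[rat]_m.+1) (j : nat) : rat :=
  if j is j'.+1 then c ord0 (inord j') else 1.

Lemma linkage_prefixE (m : nat) (c : 'M[rat]_m.+1) (p q : 'I_m.+2) :
  linkage c -> (p < q)%N ->
  linkage_prefix c q = linkage_prefix c p * c (inord p) (inord q.-1).
Proof.
move=> c_link lt_pq; have lt_qm := ltn_ord q.
case: q lt_pq lt_qm => [[|q'] //= lt_q'm] lt_pq _.
case: p lt_pq => [[|p'] lt_p'm] /= lt_pq.
  by rewrite mul1r; congr (c _ _); apply: val_inj; rewrite /= inordK.
by symmetry; apply: c_link; rewrite /= ?inordK //; lia.
Qed.

Lemma scaled_ratios (n m : nat) (a : 'I_n -> int) (c : 'M[rat]_m.+1) :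
  (forall i j : 'I_m.+1, (i <= j)%N ->
     0 < c i j /\ exists l : 'I_n, c i j = S_coef a l) ->
  linkage c ->
  exists N : 'I_m.+2 -> nat, (forall j, 0 < N j)%N /\
    forall p q : 'I_m.+2, (p < q)%N ->
      exists l : 'I_n, (N q)%:R = S_coef a l * (N p)%:R :> rat.
Proof.
move=> c_S c_link.
have prefix_gt0 (j : 'I_m.+2) : 0 < linkage_prefix c j.
  by case: j => [[|j] ?] //=; have [] := c_S ord0 (inord j) isT.
have [D D_gt0 [N NE]] := scale_to_nat prefix_gt0.
exists N; split=> [j|p q lt_pq].
  by rewrite -(ltr0n rat) NE mulr_gt0.
have le_pq : (@inord m p <= @inord m q.-1)%N.
  by rewrite !inordK //; have := ltn_ord q; lia.
have [_ [l cE]] := c_S _ _ le_pq; exists l.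
by rewrite !NE (linkage_prefixE c_link lt_pq) cE; ring.
Qed.

Lemma S_coef_balance (n : nat) (a : 'I_n -> int) (l : 'I_n) (Np Nq : nat) :
  a l != 0 -> Nq%:R = S_coef a l * Np%:R :> rat ->
  \sum_i a i * (if i == l then Nq else Np)%:Z = 0.
Proof.
move=> al_nz NqE; rewrite (bigD1 l) //= eqxx.
under eq_bigr => i /negPf -> do [].
rewrite -mulr_suml; apply: (@intr_inj rat).
have -> : \sum_(i | i != l) a i = \sum_i a i - a l.
  by rewrite [in RHS](bigD1 l) //= addrAC subrr add0r.
rewrite rmorph0 rmorphD !rmorphM /= -!pmulrn NqE /S_coef.
by field; rewrite intr_eq0.
Qed.

Lemma sum_affine (n : nat) (g w : 'I_n -> int) (u d : int) :
  \sum_i g i * (u + w i * d) = u * \sum_i g i + d * \sum_i g i * w i.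
Proof. by rewrite !mulr_sumr -big_split /=; apply: eq_bigr => i _; ring. Qed.

Lemma sum_shear (n : nat) (b g t : 'I_n -> int) (l : 'I_n) :
  \sum_i g i * (b l * t i - (i == l)%:R * \sum_i' b i' * t i') =
  \sum_i (b l * g i - g l * b i) * t i.
Proof.
set S := \sum_i' b i' * t i'.
have pick_l : \sum_i g i * ((i == l)%:R * S) = g l * S.
  rewrite (bigD1 l) //= eqxx mul1r big1 ?addr0 // => i /negPf ->.
  by rewrite mul0r mulr0.
rewrite (eq_bigr (fun i => b l * (g i * t i) - g i * ((i == l)%:R * S))); last first.
  by move=> i _; ring.
rewrite [RHS](eq_bigr (fun i => b l * (g i * t i) - g l * (b i * t i))); last first.
  by move=> i _; ring.
by rewrite !sumrB pick_l -!mulr_sumr.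
Qed.

Lemma balanced_solution_avoiding (n k : nat) (b : 'I_n -> int) (l : 'I_n)
    (g : 'I_k -> 'I_n -> int) (B y d : nat) :
  \sum_i b i = 0 -> (forall i, `|b i| <= B%:Z) -> (0 < d)%N ->
  (forall j, exists i, b l * g j i != g j l * b i) ->
  exists r : 'I_n -> nat, [/\ forall i, (r i <= 2 * (n.+1 * B * k))%N,
    \sum_i b i * (y + r i * d)%N%:Z = 0 &
    forall j, \sum_i g j i * (y + r i * d)%N%:Z != 0].
Proof.
move=> sum_b0 b_le d_gt0 g_nonpar; set R := (n.+1 * B * k)%N.
have [t [t_le Ht]] := affine_nonvanishing_point
  (fun j i => d%:Z * (b l * g j i - g j l * b i))
  (fun j => (y%:Z + R%:Z * d%:Z) * \sum_i g j i).
(* By [sum_shear], [w] is orthogonal to [b], while against [g j] it is an affine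
   form in [t] that is non-constant by non-parallelism. *)
pose w i := b l * (t i)%:Z - (i == l)%:R * \sum_i' b i' * (t i')%:Z.
have bt_le i i' : `|b i * (t i')%:Z| <= (B * k)%N%:Z.
  by rewrite normrM PoszM ler_pM // lez_nat t_le.
have w_le i : `|w i| <= R%:Z.
  have sum_le : `|\sum_i' b i' * (t i')%:Z| <= (n * (B * k))%N%:Z.
    apply: (le_trans (ler_norm_sum _ _ _)).
    apply: (le_trans (ler_sum _ (fun i _ => bt_le i i))).
    by rewrite sumr_const card_ord -mulr_natr natz -PoszM mulnC.
  have delta_le : `|(i == l)%:R * \sum_i' b i' * (t i')%:Z| <= (n * (B * k))%N%:Z.
    by case: eqP; rewrite ?mul1r ?mul0r ?normr0.
  apply: (le_trans (ler_normB _ _)).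
  have -> : R%:Z = (B * k)%N%:Z + (n * (B * k))%N%:Z.
    by rewrite /R -PoszD mulSn mulnDl mulnA.
  exact: lerD (bt_le l i) delta_le.
pose r i := absz (R%:Z + w i).
have rE i : (r i)%:Z = R%:Z + w i.
  by rewrite /r gez0_abs //; have := w_le i; rewrite ler_norml; lra.
have xE i : (y + r i * d)%N%:Z = (y%:Z + R%:Z * d%:Z) + w i * d%:Z.
  by rewrite PoszD PoszM rE; ring.
exists r; split=> [i||j].
- by rewrite -lez_nat rE PoszM; have := w_le i; rewrite ler_norml; lra.
- under eq_bigr do rewrite xE.
  rewrite sum_affine sum_b0 sum_shear big1 ?mulr0 ?addr0 // => i _.
  by rewrite subrr mul0r.
- under eq_bigr do rewrite xE.
  rewrite sum_affine sum_shear mulr_sumr.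
  under [X in _ + X]eq_bigr do rewrite mulrA.
  apply: Ht; have [i nonpar] := g_nonpar j; exists i.
  by rewrite mulf_neq0 ?subr_eq0 // eqz_nat -lt0n.
Qed.

Lemma not_multiple_nonparallel (n : nat) (a A M : 'I_n -> int) (l : 'I_n) :
  a l != 0 -> (forall i, M i != 0) -> ~ is_multiple A a ->
  exists i, a l * M l * (A i * M i) != A l * M l * (a i * M i).
Proof.
move=> al_nz M_nz A_nm.
case: (boolP [exists i, a l * M l * (A i * M i) != A l * M l * (a i * M i)]).
  by move/existsP.
move/existsPn => parallel; case: A_nm.
exists ((A l)%:~R / (a l)%:~R) => i.
have cross : a l * A i = A l * a i.
  apply: (mulIf (mulf_neq0 (M_nz l) (M_nz i))).
  move/negPn/eqP: (parallel i) => par.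
  by transitivity (a l * M l * (A i * M i)); [ring | rewrite par; ring].
have alQ_nz : (a l)%:~R != 0 :> rat by rewrite intr_eq0.
apply: (mulfI alQ_nz); rewrite mulrA mulrCA divff // mulr1 -!intrM.
by rewrite cross mulrC.
Qed.

Lemma regular_of_scaled_ratios (n m : nat) (a : 'I_n -> int) (N : 'I_m.+1 -> nat) :
  (forall i, a i != 0) -> (forall j, 0 < N j)%N ->
  (forall p q : 'I_m.+1, (p < q)%N ->
     exists l : 'I_n, (N q)%:R = S_coef a l * (N p)%:R :> rat) ->
  strongly_m_regular m a.
Proof.
move=> a_nz N_gt0 N_ratio k A A_nm col.
pose B := ((\sum_i `|a i|) * (\sum_j N j))%N.
have [y [d [y_gt0 d_gt0 Hap]]] := dilations_ap N col (2 * (n.+1 * B * k)).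
have [p [q [lt_pq col_pq]]] := pigeonhole_lt (fun j => col (N j * y)%N).
have [l NqE] := N_ratio p q lt_pq.
pose M i := if i == l then N q else N p.
have M_gt0 i : (0 < M i)%N by rewrite /M; case: eqP.
have b_le i : `|a i * (M i)%:Z| <= B%:Z.
  have N_le j : (N j <= \sum_j' N j')%N by rewrite (bigD1 j) //= leq_addr.
  rewrite normrM [`|_%:Z|]ger0_norm // -abszE -PoszM lez_nat leq_mul //.
    by rewrite (bigD1 i) //= leq_addr.
  by rewrite /M; case: eqP => _; apply: N_le.
have sum_b0 := S_coef_balance (a_nz l) NqE.
have M_nz i : (M i)%:Z != 0 by rewrite eqz_nat -lt0n.
have nonpar j := not_multiple_nonparallel (a_nz l) M_nz (A_nm j).
have [r [r_le sum_a sum_A]] := balanced_solution_avoiding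
  (g := fun j i => A j i * (M i)%:Z) y sum_b0 b_le d_gt0 nonpar.
exists (fun i => M i * (y + r i * d))%N; split; [|split; [|split]].
- by move=> i; rewrite muln_gt0 M_gt0 addn_gt0 y_gt0.
- have col_M i : col (M i * (y + r i * d))%N = col (N p * y)%N.
    by rewrite /M; case: eqP => _; rewrite Hap ?r_le ?col_pq.
  by move=> i i'; rewrite !col_M.
- by rewrite -[RHS]sum_a; apply: eq_bigr => i _; rewrite PoszM mulrA.
- move=> j; rewrite /lin_form.
  under eq_bigr do rewrite PoszM mulrA.
  exact: sum_A.
Qed.

Theorem theorem3 (n m : nat) (a : 'I_n -> int) :
  (forall i, a i != 0) ->
  (exists c : 'M[rat]_m,
     upper_triangular c /\
     (forall i j : 'I_m, (i <= j)%N ->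
        0 < c i j /\ exists l : 'I_n, c i j = S_coef a l) /\
     linkage c) ->
  strongly_m_regular m a.
Proof.
move=> a_nz [c [_ [c_S c_link]]].
case: m c c_S c_link => [|m] c c_S c_link.
  by move=> k A _ col; case: (col 0%N).
have [N [N_gt0 N_ratio]] := scaled_ratios c_S c_link.
exact: regular_of_scaled_ratios a_nz N_gt0 N_ratio.
Qed.
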